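(* For all non-negative integers $p$ and $r$, $$H_{r,p+1/2}=\frac{1}{2^{2r-1}}\binom{2p}{p}^{-1}\binom{2(r+p)}{r+p}\binom{r+p}{r}\left(O_{r+p}-O_p\right).$$
   Context: For complex $x$ not a negative integer, $H_x=\sum_{k\ge1}\left(\frac1k-\frac1{k+x}\right)$, and for complex $x$, $\binom{x}{k}=\frac{x(x-1)\cdots(x-k+1)}{k!}$. Hyperharmonic numbers: for integer $n\ge0$ and complex $q$ with $q-1$ not a negative integer (i.e. $q\notin\{0,-1,-2,\dots\}$), $H_{n,q}=\binom{n+q-1}{n}\left(H_{n+q-1}-H_{q-1}\right)$; also $H_{n,0}=\frac1n$ for $n\ge1$. Equivalently $\sum_{n\ge0}H_{n,q}z^n=\frac{-\ln(1-z)}{(1-z)^q}$, so $H_{0,q}=0$, $H_{n,1}=H_n$, and $H_{n,q}=\sum_{i=1}^nH_{i,q-1}$. The odd harmonic numbers are $O_n=\sum_{k=1}^n\frac{1}{2k-1}$, $O_0=0$. *)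

From HB Require Import structures.
From mathcomp Require Import all_boot all_order all_algebra.
From mathcomp Require Import all_classical all_reals all_analysis.
Set Implicit Arguments. Unset Strict Implicit. Unset Printing Implicit Defensive.
Import Order.TTheory GRing.Theory Num.Theory.
Import numFieldNormedType.Exports.
Local Open Scope ring_scope.

(* Generalized harmonic number H_x = sum_{k>=1} (1/k - 1/(k+x)), for real x
   (not a negative integer); defined as the limit of the partial sums. *)
Definition harm {R : realType} (x : R) : R :=
  limn (series ((fun k : nat => (k.+1%:R)^-1 - (k.+1%:R + x)^-1) : R^nat)).

Definition gbinom {R : realType} (x : R) (k : nat) : R :=
  (\prod_(i < k) (x - i%:R)) / (k`!)%:R.

Definition hyperH {R : realType} (n : nat) (q : R) : R :=
  gbinom (n%:R + q - 1) n * (harm (n%:R + q - 1) - harm (q - 1)).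

Definition oddH {R : realType} (n : nat) : R :=
  \sum_(1 <= k < n.+1) ((2 * k - 1)%N%:R)^-1.

From HB Require Import structures.
From mathcomp Require Import all_boot all_order all_algebra.
From mathcomp Require Import all_classical all_reals all_analysis.
From mathcomp Require Import ring lra zify.
Import Order.TTheory GRing.Theory Num.Theory.
Import numFieldNormedType.Exports.
Local Open Scope ring_scope.
Local Open Scope classical_set_scope.

(* Shifting the argument of the harmonic series telescopes: the partial sums of
   H_{x+n} differ from those of H_x by the n terms 1/(x+j+1), up to n tail
   terms 1/(N+x+j+1) that vanish as N grows.  With x = p - 1/2 these n terms
   are 2/(2(p+j)+1), so H_{r+p-1/2} - H_{p-1/2} = 2 (O_{r+p} - O_p).  The
   binomial factor binom(r+p-1/2, r) is the rising product of p+1/2+i over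
   i < r divided by r!, and doubling each factor turns this product into the
   ratio of factorials (2(r+p))! p! / ((2p)! (r+p)!) divided by 4^r. *)

Section HalfIntegerHyperharmonic.
Variable R : realType.

Definition harm_term (x : R) : R^nat := fun k => k.+1%:R^-1 - (k.+1%:R + x)^-1.

Definition harm_head (x : R) (n : nat) : R := \sum_(j < n) (j%:R + 1 + x)^-1.

Definition harm_tail (x : R) (n N : nat) : R :=
  \sum_(j < n) (N%:R + (j%:R + 1 + x))^-1.

Lemma cvgn_invr_natrD (c : R) : (fun N : nat => (N%:R + c)^-1) @ \oo --> 0.
Proof.
have natrD_cvgy : (fun N : nat => N%:R + c) @ \oo --> +oo.
  apply/cvgryPge => A; have /cvgryPge/(_ (A - c)) := @cvgr_idn R.
  by apply: filterS => N; rewrite lerBlDr.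
have invr_gt0_near : \forall N \near \oo, 0 < (N%:R + c)^-1.
  by have /cvgryPgt/(_ 0) := natrD_cvgy; apply: filterS => N; rewrite invr_gt0.
apply/(cvgrVy invr_gt0_near); apply: cvg_trans natrD_cvgy.
by apply: near_eq_cvg; apply: nearW => N /=; rewrite invrK.
Qed.

Lemma series_harm_termD1 (x : R) (N : nat) :
  series (harm_term (x + 1)) N
  = series (harm_term x) N + (1 + x)^-1 - (N%:R + 1 + x)^-1.
Proof.
elim: N => [|N IH]; first by rewrite /series /= !big_geq // !add0r subrr.
rewrite !seriesSr IH /harm_term.
have -> : N.+1%:R + (x + 1) = N.+1%:R + 1 + x by ring.
have -> : N.+1%:R + x = N%:R + 1 + x by rewrite mulrS; ring.
ring.
Qed.

Lemma series_harm_termDn (x : R) (n N : nat) :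
  series (harm_term (x + n%:R)) N
  = series (harm_term x) N + harm_head x n - harm_tail x n N.
Proof.
elim: n => [|n IH]; first by rewrite /harm_head /harm_tail !big_ord0 subr0 !addr0.
have -> : x + n.+1%:R = x + n%:R + 1 by rewrite mulrS; ring.
rewrite series_harm_termD1 IH /harm_head /harm_tail !big_ord_recr /=.
have -> : 1 + (x + n%:R) = n%:R + 1 + x by ring.
have -> : N%:R + 1 + (x + n%:R) = N%:R + (n%:R + 1 + x) by ring.
ring.
Qed.

Lemma harm_tail_cvg0 (x : R) (n : nat) : harm_tail x n @ \oo --> 0.
Proof.
elim: n => [|n IH].
  by rewrite /harm_tail; under eq_fun do rewrite big_ord0; exact: cvg_cst.
have -> : harm_tail x n.+1 = fun N => harm_tail x n N + (N%:R + (n%:R + 1 + x))^-1.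
  by apply: funext => N; rewrite /harm_tail big_ord_recr.
by rewrite -[0]addr0; apply: cvgD; [exact: IH | exact: cvgn_invr_natrD].
Qed.

Lemma series_harm_termDn_cvg (x : R) (n : nat) :
  cvgn (series (harm_term x)) ->
  series (harm_term (x + n%:R)) @ \oo
    --> limn (series (harm_term x)) + harm_head x n - 0.
Proof.
move=> cvg_x; rewrite (funext (series_harm_termDn x n)).
by apply: cvgB; [apply: cvgD => //; exact: cvg_cst | exact: harm_tail_cvg0].
Qed.

Lemma harmDn (x : R) (n : nat) :
  cvgn (series (harm_term x)) -> harm (x + n%:R) = harm x + harm_head x n.
Proof.
by move=> cvg_x; rewrite /harm (cvg_lim _ (@series_harm_termDn_cvg x n cvg_x)) ?subr0.
Qed.

Lemma is_cvg_harm_termDn (x : R) (n : nat) :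
  cvgn (series (harm_term x)) -> cvgn (series (harm_term (x + n%:R))).
Proof. by move=> cvg_x; apply/cvg_ex; eexists; exact: series_harm_termDn_cvg. Qed.

Lemma is_cvg_harm_termD1K (x : R) :
  cvgn (series (harm_term (x + 1))) -> cvgn (series (harm_term x)).
Proof.
move=> cvg_x1.
have -> : series (harm_term x)
    = fun N => series (harm_term (x + 1%:R)) N - harm_head x 1 + harm_tail x 1 N.
  by apply: funext => N; rewrite series_harm_termDn; ring.
apply/cvg_ex; eexists; apply: cvgD; last exact: harm_tail_cvg0.
by apply: cvgB; [exact: cvg_x1 | exact: cvg_cst].
Qed.

(* For 0 <= x <= 1 the terms lie between 0 and those of H_1, which telescope. *)
Lemma is_cvg_harm_term (x : R) : 0 <= x <= 1 -> cvgn (series (harm_term x)).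
Proof.
case/andP=> x_ge0 x_le1.
have natr_gt0 (k : nat) : (0 : R) < k.+1%:R by rewrite ltr0n.
apply: nondecreasing_is_cvgn.
  move=> m n mn; apply: (nondecreasing_series (P := xpredT) (m := 0%N)) => // k _ _.
  by rewrite /harm_term subr_ge0 lef_pV2 ?posrE; have := natr_gt0 k; lra.
exists 1 => _ [N _ <-].
apply: (le_trans (y := series (harm_term (0 + 1)) N)).
  apply: ler_sum => k _; rewrite /harm_term lerB // lef_pV2 ?posrE;
    have := natr_gt0 k; lra.
rewrite series_harm_termD1 /series /= big1 => [|k _]; last first.
  by rewrite /harm_term addr0 subrr.
have : (0 : R) <= (N%:R + 1 + 0)^-1 by rewrite invr_ge0 addr0 addr_ge0.
by rewrite add0r !addr0 invr1; lra.
Qed.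

Lemma is_cvg_harm_term_halfint (p : nat) :
  cvgn (series (harm_term (p%:R + 2^-1 - 1))).
Proof.
have -> : p%:R + 2^-1 - 1 = - 2^-1 + p%:R :> R by field.
apply: is_cvg_harm_termDn; apply: is_cvg_harm_termD1K.
have -> : - 2^-1 + 1 = 2^-1 :> R by field.
by apply: is_cvg_harm_term; apply/andP; split; lra.
Qed.

Lemma oddHS (n : nat) : oddH n.+1 = oddH n + (2 * n)%N.+1%:R^-1 :> R.
Proof.
by rewrite /oddH big_nat_recr //=; have -> : (2 * n.+1 - 1 = (2 * n).+1)%N by lia.
Qed.

Lemma oddHD_sub (r p : nat) :
  oddH (r + p) - oddH p = \sum_(j < r) (2 * (p + j))%N.+1%:R^-1 :> R.
Proof.
elim: r => [|r IH]; first by rewrite add0n subrr big_ord0.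
by rewrite addSn oddHS big_ord_recr /= -IH addnC; ring.
Qed.

Lemma harm_head_halfint (p r : nat) :
  harm_head (p%:R + 2^-1 - 1) r = 2 * (oddH (r + p) - oddH p) :> R.
Proof.
rewrite oddHD_sub /harm_head mulr_sumr; apply: eq_bigr => j _.
have -> : (2 * (p + j))%N.+1%:R = 2 * p%:R + 2 * j%:R + 1 :> R.
  by rewrite -addn1 natrD natrM natrD; ring.
have natr_ge0 (k : nat) : (0 : R) <= k%:R by [].
by field; apply: lt0r_neq0; have := natr_ge0 p; have := natr_ge0 j; lra.
Qed.

Lemma prod_falling_rising (c : R) (r : nat) :
  \prod_(i < r) (r%:R + c - 1 - i%:R) = \prod_(i < r) (c + i%:R).
Proof.
elim: r => [|r IH]; first by rewrite !big_ord0.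
rewrite big_ord_recl big_ord_recr /= mulrC.
under eq_bigr => i _ do
  have -> : r.+1%:R + c - 1 - (bump 0 i)%:R = r%:R + c - 1 - i%:R
    by rewrite /bump /= add1n !mulrS; ring.
by rewrite IH mulrS; congr (_ * _); ring.
Qed.

Lemma prod_rising_halfint (p r : nat) :
  \prod_(i < r) (p%:R + 2^-1 + i%:R) * 2 ^+ (2 * r) * (2 * p)%N`!%:R * (r + p)`!%:R
  = (2 * (r + p))%N`!%:R * p`!%:R :> R.
Proof.
elim: r => [|r IH]; first by rewrite big_ord0 mul1r expr0 mul1r add0n mulnC.
have -> : (2 * (r.+1 + p) = (2 * (r + p)).+2)%N by lia.
have -> : (2 * r.+1 = (2 * r).+2)%N by lia.
rewrite big_ord_recr /= addSn !factS.
transitivity ((2 * (r + p))%N.+2%:R * (2 * (r + p))%N.+1%:R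
              * ((2 * (r + p))%N`!%:R * p`!%:R) : R); last by rewrite !natrM; ring.
rewrite -IH !natrM !exprS.
have -> : (2 * (r + p))%N.+2%:R = 2 * r%:R + 2 * p%:R + 2 :> R.
  by rewrite -addn2 natrD natrM natrD; ring.
have -> : (2 * (r + p))%N.+1%:R = 2 * r%:R + 2 * p%:R + 1 :> R.
  by rewrite -addn1 natrD natrM natrD; ring.
have -> : (r + p).+1%:R = r%:R + p%:R + 1 :> R by rewrite -addn1 !natrD.
by field.
Qed.

Lemma natr_fact_neq0 (n : nat) : n`!%:R != 0 :> R.
Proof. by rewrite pnatr_eq0 -lt0n fact_gt0. Qed.

Lemma natr_binD (m n : nat) :
  'C(m + n, m)%:R = (m + n)`!%:R / (m`!%:R * n`!%:R) :> R.
Proof.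
have := bin_fact (leq_addr n m); rewrite addKn => <-.
by rewrite !natrM mulfK // mulf_neq0 // natr_fact_neq0.
Qed.

Lemma gbinom_halfint (p r : nat) :
  gbinom (r%:R + (p%:R + 2^-1) - 1) r
  = (2 ^+ (2 * r))^-1 * 'C(2 * p, p)%:R^-1
      * 'C(2 * (r + p), r + p)%:R * 'C(r + p, r)%:R :> R.
Proof.
have prodE := prod_rising_halfint p r.
rewrite /gbinom prod_falling_rising !mul2n -!addnn !natr_binD !addnn -!mul2n.
have := natr_fact_neq0 (2 * p)%N; have := natr_fact_neq0 (r + p).
have := natr_fact_neq0 p; have := natr_fact_neq0 r.
move=> r_neq0 p_neq0 rp_neq0 p2_neq0.
have pow_neq0 : 2 ^+ (2 * r) != 0 :> R by rewrite expf_neq0.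
have -> : \prod_(i < r) (p%:R + 2^-1 + i%:R)
    = (2 * (r + p))%N`!%:R * p`!%:R / (2 ^+ (2 * r) * (2 * p)%N`!%:R * (r + p)`!%:R) :> R.
  by rewrite -prodE; field; rewrite pow_neq0 p2_neq0 rp_neq0.
by field; rewrite p_neq0 r_neq0 rp_neq0 p2_neq0 pow_neq0.
Qed.

End HalfIntegerHyperharmonic.

Theorem lemma6 (R : realType) (p r : nat) :
  hyperH r (p%:R + 2^-1 : R) =
  ((2 : R) ^ (2 * r%:Z - 1))^-1 * ('C(2 * p, p)%:R)^-1
    * 'C(2 * (r + p), r + p)%:R * 'C(r + p, r)%:R
    * (oddH (r + p) - oddH p).
Proof.
rewrite /hyperH gbinom_halfint.
have -> : r%:R + (p%:R + 2^-1) - 1 = (p%:R + 2^-1 - 1) + r%:R :> R by ring.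
rewrite harmDn; last exact: is_cvg_harm_term_halfint.
rewrite [harm _ + _ - _]addrAC subrr add0r harm_head_halfint.
have -> : (2 : R) ^ (2 * r%:Z - 1) = 2 ^+ (2 * r) / 2.
  by rewrite -PoszM expfzDr // exprN1.
by rewrite invf_div; ring.
Qed.
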